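(* Let $X$ be a finite connected poset and $F$ a field with $\mathrm{char}(F)\ne 2$. Then every bijective $F$-linear map $\varphi:I(X,F)\to I(X,F)$ satisfying $\varphi(E(I(X,F)))\subseteq E(I(X,F))$ is either an automorphism or an anti-automorphism of $I(X,F)$.
   Context: $I(X,F)$ is the incidence algebra of the locally finite poset $X$ over $F$ (functions $f:X\times X\to F$ vanishing unless $x\le y$, with product $(fg)(x,y)=\sum_{x\le z\le y}f(x,z)g(z,y)$). A poset is connected if any two elements are joined by a finite sequence of elements in which consecutive elements are comparable. $E(A)$ denotes the set of idempotents of a ring $A$. *)

From HB Require Import structures.
From mathcomp Require Import all_boot all_order all_algebra.
Set Implicit Arguments. Unset Strict Implicit. Unset Printing Implicit Defensive.
Import Order.TTheory GRing.Theory.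
Local Open Scope ring_scope.

Section Incidence.
Variables (d : Order.disp_t) (X : finPOrderType d) (F : fieldType).

Definition incid_pred : pred {ffun X * X -> F} :=
  fun f => [forall p : X * X, (f p != 0) ==> (p.1 <= p.2)%O].

Definition incid := {f : {ffun X * X -> F} | incid_pred f}.

Definition incid_res (h : X * X -> F) : {ffun X * X -> F} :=
  [ffun p => if (p.1 <= p.2)%O then h p else 0].

Lemma incid_resP h : incid_pred (incid_res h).
Proof.
apply/forallP => p; rewrite ffunE; case: ifP => _; [by rewrite implybT | by rewrite eqxx].
Qed.

Definition incid_mk (h : X * X -> F) : incid := exist _ (incid_res h) (incid_resP h).

Definition incid_zero : incid := incid_mk (fun _ => 0).
Definition incid_one : incid := incid_mk (fun p => if p.1 == p.2 then 1 else 0).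
Definition incid_add (f g : incid) : incid := incid_mk (fun p => val f p + val g p).
Definition incid_scale (a : F) (f : incid) : incid := incid_mk (fun p => a * val f p).
(* convolution product: (fg)(x,y) = \sum_{x <= z <= y} f(x,z) g(z,y)
   (the restriction to x <= y is harmless: the sum is empty otherwise) *)
Definition incid_mul (f g : incid) : incid :=
  incid_mk (fun p => \sum_(z : X | (p.1 <= z)%O && (z <= p.2)%O) val f (p.1, z) * val g (z, p.2)).

Definition incid_idem (e : incid) : Prop := incid_mul e e = e.

Definition incid_linear (phi : incid -> incid) : Prop :=
  forall (a : F) (f g : incid),
    phi (incid_add (incid_scale a f) g) = incid_add (incid_scale a (phi f)) (phi g).

Definition incid_automorphism (phi : incid -> incid) : Prop :=
  [/\ bijective phi, incid_linear phi, phi incid_one = incid_one &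
      forall f g, phi (incid_mul f g) = incid_mul (phi f) (phi g)].

Definition incid_antiautomorphism (phi : incid -> incid) : Prop :=
  [/\ bijective phi, incid_linear phi, phi incid_one = incid_one &
      forall f g, phi (incid_mul f g) = incid_mul (phi g) (phi f)].

End Incidence.

Definition poset_connected (d : Order.disp_t) (X : finPOrderType d) : Prop :=
  forall x y : X, connect (fun a b : X => (a >=< b)%O) x y.

From HB Require Import structures.
From mathcomp Require Import all_boot all_order all_algebra.
From mathcomp Require Import ring.
Set Implicit Arguments. Unset Strict Implicit. Unset Printing Implicit Defensive.
Import Order.TTheory GRing.Theory.
Local Open Scope ring_scope.

(* Let E x y (x <= y) be the standard basis of I(X,F) and P x := phi (E x x),
   Q x y := phi (E x y).  As char F <> 2, the idempotents that phi preserves force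
   the P x to be pairwise orthogonal idempotents, each Q x y (x < y) to lie in one of
   the two Peirce corners P x I P y or P y I P x, and the Jordan products to be kept:
   Q x y Q y z + Q y z Q x y = Q x z.  The diagonal of P x is the indicator of a single
   point sigma x; sigma is a permutation of X and the corner containing Q x y is the
   one in the direction of the order between sigma x and sigma y.  Along a chain
   x < y < z the direction cannot switch (otherwise Q x z = 0), and since sigma, being
   a permutation of a finite poset preserving comparability, also reflects it, the
   direction is the same for all comparable pairs of a connected poset.  Then the Q x y
   are matrix units of I(X,F) or of its opposite ring, so phi is multiplicative or
   anti-multiplicative on the basis, hence everywhere. *)

Lemma finPOrder_ind_gt (d : Order.disp_t) (T : finPOrderType d) (P : T -> Prop) :
  (forall x, (forall z, (x < z)%O -> P z) -> P x) -> forall x, P x.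
Proof.
move=> IH x; have [n] := ubnP #|[set z | (x < z)%O]|.
elim: n x => // n IHn x gtx; apply: IH => z xz; apply: IHn.
have /proper_card : [set w | (z < w)%O] \proper [set w | (x < w)%O].
  apply/properP; split; last by exists z; rewrite !inE ?xz ?ltxx.
  by apply/subsetP => w; rewrite !inE; apply: lt_trans.
by move/leq_trans; apply.
Qed.

Lemma finPOrder_ind_lt (d : Order.disp_t) (T : finPOrderType d) (P : T -> Prop) :
  (forall x, (forall z, (z < x)%O -> P z) -> P x) -> forall x, P x.
Proof. by move=> IH; apply: (@finPOrder_ind_gt _ T^d). Qed.

Section IdempotentsInRings.
Variable R : pzRingType.
Implicit Types a b c p q e n : R.

Definition jordan a b := a * b + b * a.

Lemma jordanC a b : jordan a b = jordan b a.
Proof. exact: addrC. Qed.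

Lemma jordanDr a b c : jordan a (b + c) = jordan a b + jordan a c.
Proof. by rewrite /jordan mulrDl mulrDr addrACA. Qed.

Lemma jordanNr a b : jordan a (- b) = - jordan a b.
Proof. by rewrite /jordan mulrN mulNr opprD. Qed.

Lemma jordanBr a b c : jordan a (b - c) = jordan a b - jordan a c.
Proof. by rewrite jordanDr jordanNr. Qed.

Lemma jordanDl a b c : jordan (a + b) c = jordan a c + jordan b c.
Proof. by rewrite !(jordanC _ c) jordanDr. Qed.

Lemma jordanBl a b c : jordan (a - b) c = jordan a c - jordan b c.
Proof. by rewrite !(jordanC _ c) jordanBr. Qed.

Lemma sqrrD_nc a b : (a + b) * (a + b) = a * a + b * b + jordan a b.
Proof. by rewrite mulrDl !mulrDr [b * a + _]addrC addrACA. Qed.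

Lemma sqrrB_nc a b : (a - b) * (a - b) = a * a + b * b - jordan a b.
Proof. by rewrite sqrrD_nc mulrNN jordanNr. Qed.

Lemma idemD p q : p * p = p -> q * q = q -> p * q = 0 -> q * p = 0 ->
  (p + q) * (p + q) = p + q.
Proof. by move=> pp qq pq qp; rewrite sqrrD_nc /jordan pp qq pq qp !addr0. Qed.

Lemma idemD_nil e n : e * e = e -> n * n = 0 -> jordan e n = n ->
  (e + n) * (e + n) = e + n.
Proof. by move=> ee nn en; rewrite sqrrD_nc ee nn en addr0. Qed.

Lemma idemB_nil e n : e * e = e -> n * n = 0 -> jordan e n = n ->
  (e - n) * (e - n) = e - n.
Proof. by move=> ee nn en; apply: idemD_nil; rewrite ?mulrNN // jordanNr en. Qed.

Lemma mul_orth0 a b p q : p * q = 0 -> a * p * (q * b) = 0.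
Proof. by move=> pq; rewrite mulrA -(mulrA a) pq mulr0 mul0r. Qed.

Lemma idemD_anticomm p q : p * p = p -> q * q = q ->
  (p + q) * (p + q) = p + q -> jordan p q = 0.
Proof.
by move=> pp qq /eqP; rewrite sqrrD_nc pp qq -subr_eq0 addrAC subrr add0r => /eqP.
Qed.

Lemma peirce_offdiag p1 p2 q : p1 * p1 = p1 -> p2 * p2 = p2 ->
  p1 * p2 = 0 -> p2 * p1 = 0 ->
  jordan p1 q = q -> jordan p2 q = q -> q = p1 * q * p2 + p2 * q * p1.
Proof.
move=> p11 p22 p12 p21 q1 q2.
have -> : p1 * q * p2 = p1 * q by rewrite -{2}q2 /jordan mulrDr !mulrA p12 mul0r add0r.
have -> : p2 * q * p1 = q * p1 by rewrite -{2}q2 /jordan mulrDl -!mulrA p21 mulr0 addr0.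
exact: esym q1.
Qed.

Lemma eq_of_subr (a b c d : R) : a - b = c - d -> c = d -> a = b.
Proof. by move=> abcd cd; apply/eqP; rewrite -subr_eq0 abcd cd subrr. Qed.

Hypothesis two_reg : GRing.lreg (2%:R : R).

Lemma mulrn2_inj (a b : R) : a *+ 2 = b *+ 2 -> a = b.
Proof. by rewrite -mulr_natl -[b *+ 2]mulr_natl => /two_reg. Qed.

Lemma idemD_orth p q : p * p = p -> q * q = q ->
  (p + q) * (p + q) = p + q -> p * q = 0.
Proof.
move=> pp qq /(idemD_anticomm pp qq) pq0.
(* multiplying [pq + qp = 0] by [p] on either side shows [pq = - pqp = qp] *)
have pqp : p * q = - (p * q * p).
  by apply/eqP; rewrite -addr_eq0 -{1}pp -!mulrA -mulrDr -/(jordan p q) pq0 mulr0.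
have qpq : q * p = - (p * q * p).
  by apply/eqP; rewrite -addr_eq0 addrC -{3}pp mulrA -mulrDl -/(jordan p q) pq0 mul0r.
by apply: mulrn2_inj; rewrite mul0rn mulr2n {2}pqp -qpq.
Qed.

Lemma idemDB_jordan p q :
  (p + q) * (p + q) = p + q -> (p - q) * (p - q) = p - q -> jordan p q = q.
Proof.
rewrite sqrrD_nc sqrrB_nc => Hp Hm; apply: mulrn2_inj.
by move: (congr2 (fun u v => u - v) Hp Hm); rewrite !opprB ![_ + (_ - _)]addrC !subrKA -!mulr2n.
Qed.

End IdempotentsInRings.

Section MatrixUnits.
Variables (R : pzRingType) (d : Order.disp_t) (X : porderType d) (q : X -> X -> R).
Hypotheses (q_idem : forall x, q x x * q x x = q x x)
  (q_orth : forall x y, x != y -> q x x * q y y = 0)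
  (q_peirce : forall x y, (x < y)%O -> q x y = q x x * q x y * q y y)
  (q_chain : forall x y z, (x < y)%O -> (y < z)%O -> jordan (q x y) (q y z) = q x z).

Lemma mxunit_peirce_l a b : (a <= b)%O -> q a a * q a b = q a b.
Proof.
rewrite le_eqVlt => /predU1P[<-|ab]; first exact: q_idem.
by rewrite {1}(q_peirce ab) !mulrA q_idem -(q_peirce ab).
Qed.

Lemma mxunit_peirce_r a b : (a <= b)%O -> q a b * q b b = q a b.
Proof.
rewrite le_eqVlt => /predU1P[<-|ab]; first exact: q_idem.
by rewrite {1}(q_peirce ab) -!mulrA q_idem mulrA -(q_peirce ab).
Qed.

Lemma mxunitM a b c d' : (a <= b)%O -> (c <= d')%O ->
  q a b * q c d' = if b == c then q a d' else 0.
Proof.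
case: (eqVneq b c) => [<-{c}|bc] ab bd; last first.
  rewrite -(mxunit_peirce_r ab) -(mxunit_peirce_l bd) mulrA -(mulrA _ (q b b)).
  by rewrite q_orth // mulr0 mul0r.
case: (eqVneq a b) ab => [<-{b} _|nab ab] in bd *; first exact: mxunit_peirce_l.
case: (eqVneq b d') bd => [<-{d'} _|nbd bd]; first exact: mxunit_peirce_r.
have lt_ab : (a < b)%O by rewrite lt_neqAle nab.
have lt_bd : (b < d')%O by rewrite lt_neqAle nbd.
rewrite -(q_chain lt_ab lt_bd) /jordan.
have da : d' != a by rewrite gt_eqF // (lt_trans lt_ab lt_bd).
have -> : q b d' * q a b = 0.
  rewrite -(mxunit_peirce_r bd) -(mxunit_peirce_l ab) mulrA -(mulrA _ (q d' d')).
  by rewrite q_orth // mulr0 mul0r.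
by rewrite addr0.
Qed.

End MatrixUnits.

Section OrientationLocal.
Variables (d : Order.disp_t) (T : finPOrderType d) (s : T -> T).
Hypotheses (s_inj : injective s)
  (s_lt : forall x y, (x < y)%O -> (s x < s y)%O || (s y < s x)%O)
  (s_chain : forall x y z, (x < y)%O -> (y < z)%O -> (s x < s y)%O = (s y < s z)%O).

Lemma comparable_map x y : (x >=< y)%O -> (s x >=< s y)%O.
Proof.
case/comparable_ltgtP=> [xy|yx|->]; last exact: comparablexx.
  by case/orP: (s_lt xy) => /lt_comparable; rewrite // comparable_sym.
by case/orP: (s_lt yx) => /lt_comparable; rewrite // comparable_sym.
Qed.

(* [s] is injective on the finite set of comparable pairs, which it maps into itself *)
Lemma comparable_map_rev x y : (s x >=< s y)%O -> (x >=< y)%O.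
Proof.
pose S := [set p : T * T | (p.1 >=< p.2)%O]; pose f p := (s p.1, s p.2).
have f_inj : injective f by move=> [? ?] [? ?] [/s_inj -> /s_inj ->].
have fS : f @: S = S.
  apply/eqP; rewrite eqEcard card_imset // leqnn andbT.
  by apply/subsetP => q /imsetP[p]; rewrite !inE => /comparable_map cp ->.
move=> sxy; have : (s x, s y) \in f @: S by rewrite fS inE.
by case/imsetP => -[u v]; rewrite inE => uv [/s_inj -> /s_inj ->].
Qed.

Lemma orient_lt x y z : (x < y)%O -> (x < z)%O -> (s x < s y)%O = (s x < s z)%O.
Proof.
wlog suff W : y z / (x < y)%O -> (x < z)%O -> (s x < s y)%O -> (s x < s z)%O.
  by move=> xy xz; apply/idP/idP; apply: W.
move=> xy xz sxy; apply: contraT => nsxz.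
have szx : (s z < s x)%O by move: (s_lt xz); rewrite (negbTE nsxz).
have szy := lt_trans szx sxy.
case: (comparable_ltgtP (comparable_map_rev (lt_comparable szy))) => [zy|yz|zy].
- by move: (s_chain xz zy); rewrite (negbTE nsxz) szy.
- by move: (s_chain xy yz); rewrite sxy lt_gtF.
- by rewrite zy ltxx in szy.
Qed.

End OrientationLocal.

Lemma orient_gt (d : Order.disp_t) (T : finPOrderType d) (s : T -> T) :
    injective s ->
    (forall x y, (x < y)%O -> (s x < s y)%O || (s y < s x)%O) ->
    (forall x y z, (x < y)%O -> (y < z)%O -> (s x < s y)%O = (s y < s z)%O) ->
  forall x y z, (y < x)%O -> (z < x)%O -> (s y < s x)%O = (s z < s x)%O.
Proof.
move=> s_inj s_lt s_chain; apply: (@orient_lt _ T^d) => // [x y xy | x y z xy yz].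
  by move: xy; rewrite !ltEdual; apply: s_lt.
by move: xy yz; rewrite !ltEdual => xy yz; apply/esym/s_chain.
Qed.

Section Orientation.
Variables (d : Order.disp_t) (T : finPOrderType d) (s : T -> T).
Hypotheses (s_inj : injective s)
  (s_lt : forall x y, (x < y)%O -> (s x < s y)%O || (s y < s x)%O)
  (s_chain : forall x y z, (x < y)%O -> (y < z)%O -> (s x < s y)%O = (s y < s z)%O).

Definition preserves_order x y := if (x < y)%O then (s x < s y)%O else (s y < s x)%O.

Lemma preserves_orderC x y : (x >=< y)%O -> preserves_order x y = preserves_order y x.
Proof. by move=> cxy; rewrite /preserves_order; case: (comparable_ltgtP cxy) => // ->. Qed.

Lemma preserves_order_local x y z : (x >=< y)%O -> (x >=< z)%O -> x != y -> x != z ->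
  preserves_order x y = preserves_order x z.
Proof.
rewrite /preserves_order => /comparable_ltgtP[xy|yx|->]; rewrite ?eqxx //;
  case/comparable_ltgtP=> [xz|zx|->]; rewrite ?eqxx // => _ _.
- exact: orient_lt.
- by rewrite (s_chain zx xy).
- by rewrite (s_chain yx xz).
- exact: (orient_gt s_inj s_lt s_chain yx zx).
Qed.

Definition preserves_order_at (x : T) :=
  [exists y, [&& (x >=< y)%O, x != y & preserves_order x y]].

Lemma preserves_order_at_comparable x y :
  (x >=< y)%O -> preserves_order_at x -> preserves_order_at y.
Proof.
move=> cxy upx; have [<- //|xy] := eqVneq x y.
case/existsP: upx => w /and3P[cxw xw pxw].
apply/existsP; exists x; rewrite comparable_sym cxy eq_sym xy.
by rewrite -preserves_orderC // (preserves_order_local cxy cxw xy xw).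
Qed.

Theorem monotone_or_antitone : (forall x y : T, connect (fun a b => (a >=< b)%O) x y) ->
  (forall x y, (x < y)%O -> (s x < s y)%O) \/ (forall x y, (x < y)%O -> (s y < s x)%O).
Proof.
move=> conn; have up_const x y : preserves_order_at x -> preserves_order_at y.
  case/connectP: (conn x y) => p; elim: p x => [x _ -> //|z p IH x /= /andP[cxz pz] yp].
  by move/(preserves_order_at_comparable cxz); apply: IH.
have [/existsP[x0 up0]|none] := boolP [exists x, preserves_order_at x].
  left=> x y xy; case/existsP: (up_const x0 x up0) => w /and3P[cxw xw pxw].
  have := preserves_order_local (lt_comparable xy) cxw (negbT (lt_eqF xy)) xw.
  by rewrite pxw /preserves_order xy.
right=> x y xy; apply: contraNT none => nsyx; apply/existsP; exists x; apply/existsP; exists y.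
rewrite (lt_comparable xy) (lt_eqF xy) /preserves_order xy /=.
by move: (s_lt xy); rewrite (negbTE nsyx) orbF.
Qed.

End Orientation.

Section IncidenceAlgebra.
Variables (d : Order.disp_t) (X : finPOrderType d) (F : fieldType).
Local Notation A := (incid X F).

HB.instance Definition _ := Choice.copy A {f : {ffun X * X -> F} | incid_pred f}.
HB.instance Definition _ := SubType.copy A {f : {ffun X * X -> F} | incid_pred f}.

Lemma incid_ext (f g : A) : (forall p, val f p = val g p) -> f = g.
Proof. by move=> fg; apply/val_inj/ffunP. Qed.

Lemma incid_out (f : A) p : ~~ (p.1 <= p.2)%O -> val f p = 0.
Proof. by move=> p12; have /forallP/(_ p) := valP f; case: eqP => // _; rewrite (negbTE p12). Qed.

Lemma incid_mkE h p : (~~ (p.1 <= p.2)%O -> h p = 0) -> val (incid_mk h) p = h p.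
Proof. by move=> h0; rewrite /= ffunE; case: ifP => // /negbT/h0. Qed.

Lemma ival_add (f g : A) p : val (incid_add f g) p = val f p + val g p.
Proof. by rewrite incid_mkE // => /[dup] /(incid_out f) -> /(incid_out g) ->; rewrite addr0. Qed.

Lemma ival_scale a (f : A) p : val (incid_scale a f) p = a * val f p.
Proof. by rewrite incid_mkE // => /(incid_out f) ->; rewrite mulr0. Qed.

Lemma ival_one x y : val (incid_one X F) (x, y) = (x == y)%:R.
Proof. by rewrite incid_mkE //=; case: eqP => // ->; rewrite lexx. Qed.

Lemma ival_mul (f g : A) x y :
  val (incid_mul f g) (x, y) = \sum_z val f (x, z) * val g (z, y).
Proof.
rewrite /= ffunE /= [RHS](bigID (fun z => (x <= z)%O && (z <= y)%O)) /=.
rewrite [X in _ = _ + X]big1 ?addr0 => [|z]; last first.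
  case/nandP => [xz|zy]; first by rewrite (@incid_out f (x, z)) ?mul0r.
  by rewrite (@incid_out g (z, y)) ?mulr0.
case: ifP => // /negbT nxy; rewrite big1 // => z /andP[xz zy].
by rewrite (le_trans xz zy) in nxy.
Qed.

Lemma incid_addA : associative (@incid_add d X F).
Proof. by move=> f g h; apply: incid_ext => p; rewrite !ival_add addrA. Qed.
Lemma incid_addC : commutative (@incid_add d X F).
Proof. by move=> f g; apply: incid_ext => p; rewrite !ival_add addrC. Qed.
Lemma incid_add0 : left_id (incid_zero X F) (@incid_add d X F).
Proof. by move=> f; apply: incid_ext => p; rewrite ival_add incid_mkE // add0r. Qed.
Lemma incid_addN : left_inverse (incid_zero X F) (incid_scale (-1)) (@incid_add d X F).
Proof.
by move=> f; apply: incid_ext => p; rewrite ival_add ival_scale incid_mkE // mulN1r addNr.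
Qed.

HB.instance Definition _ := GRing.isZmodule.Build A incid_addA incid_addC incid_add0 incid_addN.

Lemma ivalD (f g : A) p : val (f + g) p = val f p + val g p.
Proof. exact: ival_add. Qed.
Lemma ival0 p : val (0 : A) p = 0.
Proof. by rewrite incid_mkE. Qed.
Lemma ivalN (f : A) p : val (- f) p = - val f p.
Proof. by rewrite ival_scale mulN1r. Qed.
Lemma ivalB (f g : A) p : val (f - g) p = val f p - val g p.
Proof. by rewrite ivalD ivalN. Qed.

Lemma incid_mulA : associative (@incid_mul d X F).
Proof.
move=> f g h; apply: incid_ext => -[x y]; rewrite !ival_mul.
under eq_bigr => z _ do rewrite ival_mul big_distrr.
under [RHS]eq_bigr => z _ do rewrite ival_mul big_distrl.
by rewrite exchange_big; apply: eq_bigr => z _; apply: eq_bigr => w _; rewrite /= mulrA.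
Qed.
Lemma incid_mul1 : left_id (incid_one X F) (@incid_mul d X F).
Proof.
move=> f; apply: incid_ext => -[x y]; rewrite ival_mul (bigD1 x) //= ival_one eqxx mul1r.
by rewrite big1 ?addr0 // => z zx; rewrite ival_one eq_sym (negbTE zx) mul0r.
Qed.
Lemma incid_mulr1 : right_id (incid_one X F) (@incid_mul d X F).
Proof.
move=> f; apply: incid_ext => -[x y]; rewrite ival_mul (bigD1 y) //= ival_one eqxx mulr1.
by rewrite big1 ?addr0 // => z zy; rewrite ival_one (negbTE zy) mulr0.
Qed.
Lemma incid_mulDl : left_distributive (@incid_mul d X F) (@incid_add d X F).
Proof.
move=> f g h; apply: incid_ext => -[x y]; rewrite ival_add !ival_mul -big_split.
by apply: eq_bigr => z _; rewrite ival_add mulrDl.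
Qed.
Lemma incid_mulDr : right_distributive (@incid_mul d X F) (@incid_add d X F).
Proof.
move=> f g h; apply: incid_ext => -[x y]; rewrite ival_add !ival_mul -big_split.
by apply: eq_bigr => z _; rewrite ival_add mulrDr.
Qed.

HB.instance Definition _ := GRing.Zmodule_isPzRing.Build A
  incid_mulA incid_mul1 incid_mulr1 incid_mulDl incid_mulDr.

Lemma ival1 x y : val (1 : A) (x, y) = (x == y)%:R.
Proof. exact: ival_one. Qed.

Lemma ivalM (f g : A) x y : val (f * g) (x, y) = \sum_z val f (x, z) * val g (z, y).
Proof. exact: ival_mul. Qed.

Lemma incid_scaleA a b (f : A) : incid_scale a (incid_scale b f) = incid_scale (a * b) f.
Proof. by apply: incid_ext => p; rewrite !ival_scale mulrA. Qed.
Lemma incid_scale1 : left_id 1 (@incid_scale d X F).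
Proof. by move=> f; apply: incid_ext => p; rewrite ival_scale mul1r. Qed.
Lemma incid_scaleDr : right_distributive (@incid_scale d X F) +%R.
Proof. by move=> a f g; apply: incid_ext => p; rewrite !(ival_scale, ivalD) mulrDr. Qed.
Lemma incid_scaleDl (f : A) : {morph (@incid_scale d X F)^~ f : a b / a + b}.
Proof. by move=> a b; apply: incid_ext => p; rewrite !(ival_scale, ivalD) mulrDl. Qed.

HB.instance Definition _ := GRing.Zmodule_isLmodule.Build F A
  incid_scaleA incid_scale1 incid_scaleDr incid_scaleDl.

Lemma ivalZ a (f : A) p : val (a *: f) p = a * val f p.
Proof. exact: ival_scale. Qed.

Lemma incid_scaleAl a (f g : A) : a *: (f * g) = (a *: f) * g.
Proof.
apply: incid_ext => -[x y]; rewrite ivalZ !ivalM big_distrr.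
by apply: eq_bigr => z _; rewrite ivalZ /= mulrA.
Qed.
Lemma incid_scaleAr a (f g : A) : a *: (f * g) = f * (a *: g).
Proof.
apply: incid_ext => -[x y]; rewrite ivalZ !ivalM big_distrr.
by apply: eq_bigr => z _; rewrite ivalZ /= mulrCA.
Qed.

Lemma ival_sum I (r : seq I) (P : pred I) (G : I -> A) q :
  val (\sum_(i <- r | P i) G i) q = \sum_(i <- r | P i) val (G i) q.
Proof. by elim/big_rec2: _ => [|i y1 y2 _ <-]; rewrite ?ival0 ?ivalD. Qed.

Lemma ival_diagM (f g : A) t : val (f * g) (t, t) = val f (t, t) * val g (t, t).
Proof.
rewrite ivalM (bigD1 t) //= big1 ?addr0 // => z zt.
have [tz|ntz] := boolP (t <= z)%O; last by rewrite incid_out ?mul0r.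
by rewrite (@incid_out g (z, t)) ?mulr0 //= lt_geF // lt_neqAle eq_sym zt.
Qed.

Lemma incid_two_lreg : (2 : F) != 0 -> GRing.lreg (2%:R : A).
Proof.
move=> two0 f g; rewrite !mulr_natl => fg; apply: incid_ext => p.
move/(congr1 (fun h : A => val h p)): fg; rewrite !mulr2n !ivalD -!mulr2n.
by rewrite -(mulr_natl (val f p)) -(mulr_natl (val g p)) => /(mulfI two0).
Qed.

Definition incid_delta (x y : X) : A := incid_mk (fun p => (p == (x, y))%:R).

Lemma ival_delta x y p : val (incid_delta x y) p = ((p == (x, y)) && (x <= y)%O)%:R.
Proof. by rewrite /= ffunE; case: eqP => [->|] /=; case: ifP; rewrite ?andbT ?andbF. Qed.

Lemma incid_delta_out x y : ~~ (x <= y)%O -> incid_delta x y = 0.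
Proof. by move=> /negbTE nxy; apply: incid_ext => p; rewrite ival_delta nxy andbF ival0. Qed.

Lemma incid_deltaM a b c d' : (a <= b)%O -> (c <= d')%O ->
  incid_delta a b * incid_delta c d' = if b == c then incid_delta a d' else 0.
Proof.
move=> ab cd; apply: incid_ext => -[u v]; rewrite ivalM.
under eq_bigr => z _ do rewrite !ival_delta !xpair_eqE ab cd !andbT -natrM mulnb.
case: (eqVneq b c) cd => [<- bd|bc _]; last first.
  rewrite ival0 big1 // => z _; case: (z =P b) => [->|]; last by rewrite andbF.
  by rewrite (negbTE bc) andbF.
rewrite (bigD1 b) //= big1 => [|z /negbTE zb]; last by rewrite zb andbF.
rewrite ival_delta xpair_eqE (le_trans ab bd) !eqxx addr0 !andbT.
by case: (u == a); case: (v == d').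
Qed.

Lemma incid_sum_delta (f : A) : f = \sum_p val f p *: incid_delta p.1 p.2.
Proof.
apply: incid_ext => q; rewrite ival_sum (bigD1 q) // big1 => [|p pq]; last first.
  by rewrite ivalZ ival_delta -surjective_pairing eq_sym (negbTE pq) mulr0.
rewrite Monoid.mulm1 ivalZ ival_delta -surjective_pairing eqxx.
by have [//|/incid_out ->] := boolP (q.1 <= q.2)%O; rewrite ?mulr1 ?mul0r.
Qed.

Lemma incid_delta_neq0 x y : (x <= y)%O -> incid_delta x y != 0.
Proof.
move=> xy; apply/eqP => /(congr1 (fun f : A => val f (x, y))).
by rewrite ival_delta ival0 eqxx xy => /eqP; rewrite oner_eq0.
Qed.

Lemma ival_deltaMl s (f : A) u v :
  val (incid_delta s s * f) (u, v) = if u == s then val f (u, v) else 0.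
Proof.
rewrite ivalM; have [-> | us] := eqVneq u s; last first.
  by rewrite big1 // => z _; rewrite ival_delta xpair_eqE (negbTE us) mul0r.
rewrite (bigD1 s) // big1 => [|z zs]; last first.
  by rewrite ival_delta xpair_eqE (negbTE zs) andbF mul0r.
by rewrite Monoid.mulm1 ival_delta xpair_eqE eqxx lexx mul1r.
Qed.

Lemma ival_deltaMr t (f : A) u v :
  val (f * incid_delta t t) (u, v) = if v == t then val f (u, v) else 0.
Proof.
rewrite ivalM; have [-> | vt] := eqVneq v t; last first.
  by rewrite big1 // => z _; rewrite ival_delta xpair_eqE (negbTE vt) andbF mulr0.
rewrite (bigD1 t) // big1 => [|z zt]; last first.
  by rewrite ival_delta xpair_eqE (negbTE zt) mulr0.
by rewrite Monoid.mulm1 ival_delta xpair_eqE eqxx lexx mulr1.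
Qed.

Lemma delta_mul_delta_out s t (f : A) :
  ~~ (s <= t)%O -> incid_delta s s * f * incid_delta t t = 0.
Proof.
move=> st; apply: incid_ext => -[u v]; rewrite ival_deltaMr ival_deltaMl ival0.
by case: eqP => // ->; case: eqP => // ->; rewrite incid_out.
Qed.

Lemma incid_mul_sumZ (a b : X * X -> F) (U V : X * X -> A) :
  (\sum_p a p *: U p) * (\sum_q b q *: V q) = \sum_p \sum_q (a p * b q) *: (U p * V q).
Proof.
rewrite mulr_suml; apply: eq_bigr => p _; rewrite mulr_sumr; apply: eq_bigr => q _.
by rewrite -incid_scaleAl -incid_scaleAr scalerA.
Qed.

Lemma incid_diag1_lreg (u : A) : (forall t, val u (t, t) = 1) -> GRing.lreg u.
Proof.
move=> u1 f g fg; apply/eqP; rewrite -subr_eq0; apply/eqP.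
have : u * (f - g) = 0 by rewrite mulrBr fg subrr.
move: (f - g) => a ua0; apply: incid_ext => -[x y]; rewrite ival0.
elim/finPOrder_ind_gt: x y => x IHx y.
have := congr1 (fun h : A => val h (x, y)) ua0.
rewrite ival0 ivalM (bigD1 x) //= u1 mul1r big1 ?addr0 // => z zx.
have [xz|nxz] := boolP (x <= z)%O; last by rewrite incid_out ?mul0r.
by rewrite IHx ?mulr0 // lt_neqAle eq_sym zx xz.
Qed.

Lemma incid_diag1_rreg (u : A) : (forall t, val u (t, t) = 1) -> GRing.rreg u.
Proof.
move=> u1 f g fg; apply/eqP; rewrite -subr_eq0; apply/eqP.
have : (f - g) * u = 0 by rewrite mulrBl fg subrr.
move: (f - g) => a au0; apply: incid_ext => -[x y]; rewrite ival0.
elim/finPOrder_ind_lt: y x => y IHy x.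
have := congr1 (fun h : A => val h (x, y)) au0.
rewrite ival0 ivalM (bigD1 y) //= u1 mulr1 big1 ?addr0 // => z zy.
have [zy'|nzy] := boolP (z <= y)%O; last by rewrite (@incid_out _ (z, y)) ?mulr0.
by rewrite IHy ?mul0r // lt_neqAle zy zy'.
Qed.

End IncidenceAlgebra.

Section IdempotentPreserving.
Variables (d : Order.disp_t) (X : finPOrderType d) (F : fieldType).
Local Notation A := (incid X F).
Hypothesis two_neq0 : (2 : F) != 0.
Variable phi : A -> A.
Hypotheses (phi_lin : incid_linear phi) (phi_inj : injective phi)
  (phi_idem : forall f, incid_idem f -> incid_idem (phi f)).

HB.instance Definition _ := GRing.isLinear.Build F A A *:%R phi phi_lin.

Let two_reg := @incid_two_lreg d X F two_neq0.

Local Notation E := (@incid_delta _ X F).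
Local Notation P x := (phi (E x x)).
Local Notation Q x y := (phi (E x y)).

Lemma phi_idemM f : f * f = f -> phi f * phi f = phi f.
Proof. exact: phi_idem. Qed.

Lemma P_idem x : P x * P x = P x.
Proof. by apply: phi_idemM; rewrite incid_deltaM ?eqxx. Qed.

Lemma P_orth x y : x != y -> P x * P y = 0.
Proof.
move=> xy; apply: (idemD_orth two_reg) (P_idem x) (P_idem y) _.
rewrite -linearD; apply/phi_idemM/idemD; rewrite incid_deltaM ?eqxx //.
  by rewrite (negbTE xy).
by rewrite eq_sym (negbTE xy).
Qed.

Lemma phi_jordan_nil f n : f * f = f -> n * n = 0 -> jordan f n = n ->
  jordan (phi f) (phi n) = phi n.
Proof.
move=> ff nn fn; apply: (idemDB_jordan two_reg); rewrite -(linearD, linearB).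
  exact/phi_idemM/idemD_nil.
exact/phi_idemM/idemB_nil.
Qed.

Lemma PQ_jordan_l x y : (x < y)%O -> jordan (P x) (Q x y) = Q x y.
Proof.
move=> lt_xy; have le_xy := ltW lt_xy; have yx := gt_eqF lt_xy.
by apply: phi_jordan_nil; rewrite /jordan !incid_deltaM // ?eqxx ?yx ?addr0.
Qed.

Lemma PQ_jordan_r x y : (x < y)%O -> jordan (P y) (Q x y) = Q x y.
Proof.
move=> lt_xy; have le_xy := ltW lt_xy; have yx := gt_eqF lt_xy.
by apply: phi_jordan_nil; rewrite /jordan !incid_deltaM // ?eqxx ?yx ?add0r.
Qed.

Lemma Q_peirce x y : (x < y)%O -> Q x y = P x * Q x y * P y + P y * Q x y * P x.
Proof.
move=> lt_xy; have xy := lt_eqF lt_xy.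
apply: peirce_offdiag; rewrite ?P_idem ?P_orth ?PQ_jordan_l ?PQ_jordan_r //.
  by rewrite xy.
by rewrite eq_sym xy.
Qed.

Ltac expand_deltas :=
  rewrite ?(mulrDl, mulrDr, mulrBl, mulrBr, mulrN, mulNr, mulrNN) ?incid_deltaM // ?eqxx.

Ltac incid_ring :=
  apply: incid_ext => ?; rewrite ?(ivalD, ivalN, ivalB, ival0); ring.

Lemma Q_chain x y z : (x < y)%O -> (y < z)%O -> jordan (Q x y) (Q y z) = Q x z.
Proof.
move=> lt_xy lt_yz; have lt_xz := lt_trans lt_xy lt_yz.
have le_xy := ltW lt_xy; have le_yz := ltW lt_yz; have le_xz := ltW lt_xz.
have yx := gt_eqF lt_xy; have zy := gt_eqF lt_yz; have zx := gt_eqF lt_xz.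
have xy := lt_eqF lt_xy; have yz := lt_eqF lt_yz; have xz := lt_eqF lt_xz.
pose g := E x x + E z z.
have gg : g * g = g by apply: idemD; rewrite incid_deltaM ?eqxx ?zx ?xz.
(* For all signs a, b the element g + a E x y + b E y z - ab E x z is idempotent;
   comparing a = 1 with a = -1 isolates the Jordan product of E x y and E y z. *)
have H1 : jordan (phi g + Q x y) (Q y z - Q x z) = Q y z - Q x z.
{ rewrite -linearD -linearB; apply: phi_jordan_nil; first apply: idemD_nil => //.
  all: by rewrite /jordan /g; expand_deltas; rewrite ?(xy, yx, yz, zy, xz, zx); incid_ring. }
have H2 : jordan (phi g - Q x y) (Q y z + Q x z) = Q y z + Q x z.
{ rewrite -linearD -linearB; apply: phi_jordan_nil; first apply: idemB_nil => //.
  all: by rewrite /jordan /g; expand_deltas; rewrite ?(xy, yx, yz, zy, xz, zx); incid_ring. }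
have G2 : jordan (phi g) (Q x z) = Q x z *+ 2.
  by rewrite linearD jordanDl PQ_jordan_l // PQ_jordan_r // mulr2n.
rewrite jordanDl !jordanBr in H1; rewrite jordanBl !jordanDr in H2.
have H := congr2 (fun u v => u + v *+ 2) (congr2 (fun u v => u - v) H1 H2) G2.
by apply: (mulrn2_inj two_reg); apply: (eq_of_subr _ H); rewrite !mulr2n; incid_ring.
Qed.

Lemma Q_neq0 x y : (x <= y)%O -> Q x y != 0.
Proof.
move=> xy; apply: contraNneq (incid_delta_neq0 F xy).
by rewrite -{1}(linear0 phi) => /phi_inj ->.
Qed.

Lemma P_diag x t : val (P x) (t, t) != 0 -> val (P x) (t, t) = 1.
Proof.
move=> nz; apply/eqP; rewrite -subr_eq0; apply/eqP; apply: (mulfI nz).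
by rewrite mulrBr mulr1 -ival_diagM P_idem subrr mulr0.
Qed.

Lemma P_diag_exists x : exists t, val (P x) (t, t) != 0.
Proof.
have [/existsP //|] := boolP [exists t, val (P x) (t, t) != 0].
rewrite negb_exists => /forallP P0.
have diag1 t : val (1 - P x) (t, t) = 1.
  by rewrite ivalB ival1 eqxx (eqP (negPn (P0 t))) subr0.
case/eqP: (Q_neq0 (lexx x)); apply: (incid_diag1_lreg diag1).
by rewrite mulrBl mul1r P_idem subrr mulr0.
Qed.

Definition sigma x : X := odflt x [pick t | val (P x) (t, t) != 0].

Lemma sigmaP x : val (P x) (sigma x, sigma x) = 1.
Proof.
rewrite /sigma; case: pickP => [t /P_diag //|P0].
by have [t] := P_diag_exists x; rewrite P0.
Qed.

Lemma P_diag_orth x y t : x != y -> val (P x) (t, t) * val (P y) (t, t) = 0.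
Proof. by move=> xy; rewrite -ival_diagM P_orth // ival0. Qed.

Lemma sigma_inj : injective sigma.
Proof.
move=> x y sxy; apply/eqP; apply: contraT => xy.
have := P_diag_orth (sigma x) xy; rewrite (sigmaP x) mul1r sxy (sigmaP y).
by move/eqP; rewrite oner_eq0.
Qed.

Lemma sum_sigma_diag t : \sum_z (if t == sigma z then val (P z) (t, t) else 0) = 1.
Proof.
have sigmaK := f_invF sigma_inj; set z0 := invF sigma_inj t.
rewrite (bigD1 z0) // big1 => [|z zz0]; last first.
  by case: eqP => // tz; case/eqP: zz0; rewrite /z0 tz invF_f.
by rewrite Monoid.mulm1 (sigmaK t) eqxx -{1 2}(sigmaK t) (sigmaP z0).
Qed.

Lemma sigma_le_corner x y a : a != 0 -> P x * a = a -> a * P y = a ->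
  (sigma x <= sigma y)%O.
Proof.
move=> a0 xa ay; apply: (contraNT _ a0) => nle.
pose Ul := \sum_z E (sigma z) (sigma z) * P z.
pose Ur := \sum_z P z * E (sigma z) (sigma z).
have Ul_reg : GRing.lreg Ul.
  apply: incid_diag1_lreg => t; rewrite ival_sum -(sum_sigma_diag t).
  by apply: eq_bigr => z _; rewrite ival_deltaMl.
have Ur_reg : GRing.rreg Ur.
  apply: incid_diag1_rreg => t; rewrite ival_sum -(sum_sigma_diag t).
  by apply: eq_bigr => z _; rewrite ival_deltaMr.
have Ula : Ul * a = E (sigma x) (sigma x) * a.
  rewrite mulr_suml (bigD1 x) //= -mulrA xa big1 ?addr0 // => z zx.
  by rewrite -xa mul_orth0 // P_orth.
have aUr : a * Ur = a * E (sigma y) (sigma y).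
  rewrite mulr_sumr (bigD1 y) //= mulrA ay big1 ?addr0 // => z zy.
  by rewrite -ay mul_orth0 // P_orth // eq_sym.
apply/eqP/Ur_reg/Ul_reg; rewrite mul0r mulr0 mulrA Ula -mulrA aUr mulrA.
exact: delta_mul_delta_out.
Qed.

Lemma Q_orient x y : (x < y)%O ->
  (sigma x < sigma y)%O /\ Q x y = P x * Q x y * P y \/
  (sigma y < sigma x)%O /\ Q x y = P y * Q x y * P x.
Proof.
move=> lt_xy; have sxy : sigma x != sigma y by rewrite (inj_eq sigma_inj) lt_eqF.
have Qxy := Q_peirce lt_xy.
have corner u v : P u * Q x y * P v != 0 -> (sigma u <= sigma v)%O.
  by move/sigma_le_corner; apply; rewrite ?mulrA ?P_idem // -mulrA P_idem.
have [a0|/corner le_xy] := eqVneq (P x * Q x y * P y) 0.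
  rewrite a0 add0r in Qxy; right; split=> //.
  by rewrite lt_neqAle eq_sym sxy corner // -Qxy Q_neq0 // ltW.
have [b0|/corner le_yx] := eqVneq (P y * Q x y * P x) 0.
  by left; split; [rewrite lt_neqAle sxy | rewrite {1}Qxy b0 addr0].
by case/eqP: sxy; apply: le_anti; rewrite le_xy le_yx.
Qed.

Lemma sigma_chain x y z : (x < y)%O -> (y < z)%O ->
  (sigma x < sigma y)%O = (sigma y < sigma z)%O.
Proof.
move=> lt_xy lt_yz; have /negP Qxz := Q_neq0 (ltW (lt_trans lt_xy lt_yz)).
have [xy yz] := (negbT (lt_eqF lt_xy), negbT (lt_eqF lt_yz)).
have [yx zy] := (negbT (gt_eqF lt_xy), negbT (gt_eqF lt_yz)).
case: (Q_orient lt_xy) => [[s_xy Qxy] | [s_yx Qxy]];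
  case: (Q_orient lt_yz) => [[s_yz Qyz] | [s_zy Qyz]].
- by rewrite s_xy s_yz.
- case: Qxz; rewrite -(Q_chain lt_xy lt_yz) /jordan.
  have -> : Q x y * Q y z = 0 by rewrite Qxy Qyz -[P z * _ * _]mulrA mul_orth0 ?P_orth.
  by rewrite Qxy Qyz -[P x * _ * _]mulrA mul_orth0 ?P_orth ?add0r.
- case: Qxz; rewrite -(Q_chain lt_xy lt_yz) /jordan.
  have -> : Q x y * Q y z = 0 by rewrite Qxy Qyz -[P y * Q y z * _]mulrA mul_orth0 ?P_orth.
  by rewrite Qxy Qyz -[P y * Q x y * _]mulrA mul_orth0 ?P_orth ?add0r.
- by rewrite (lt_gtF s_yx) (lt_gtF s_zy).
Qed.

Lemma sigma_lt_cmp x y : (x < y)%O -> (sigma x < sigma y)%O || (sigma y < sigma x)%O.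
Proof. by case/Q_orient => -[-> _]; rewrite ?orbT. Qed.

Lemma phi_sum_delta f : phi f = \sum_p val f p *: Q p.1 p.2.
Proof.
rewrite {1}(incid_sum_delta f) linear_sum.
by apply: eq_bigr => p _; rewrite linearZ.
Qed.

Lemma phi_mul_delta_expand f g :
  phi (f * g) = \sum_p \sum_q (val f p * val g q) *: phi (E p.1 p.2 * E q.1 q.2).
Proof.
rewrite {1}(incid_sum_delta f) {1}(incid_sum_delta g) incid_mul_sumZ linear_sum.
by apply: eq_bigr => p _; rewrite linear_sum; apply: eq_bigr => q _; rewrite linearZ.
Qed.

Lemma phi_mulM : (forall a b c d', phi (E a b * E c d') = Q a b * Q c d') ->
  forall f g, phi (f * g) = phi f * phi g.
Proof.
move=> phiEM f g; rewrite phi_mul_delta_expand !phi_sum_delta incid_mul_sumZ.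
by apply: eq_bigr => p _; apply: eq_bigr => q _; rewrite phiEM.
Qed.

Lemma phi_mulMr : (forall a b c d', phi (E a b * E c d') = Q c d' * Q a b) ->
  forall f g, phi (f * g) = phi g * phi f.
Proof.
move=> phiEM f g; rewrite phi_mul_delta_expand !phi_sum_delta incid_mul_sumZ exchange_big.
by apply: eq_bigr => p _; apply: eq_bigr => q _; rewrite phiEM mulrC.
Qed.

Lemma phi_deltaM_incr : (forall x y, (x < y)%O -> (sigma x < sigma y)%O) ->
  forall a b c d', phi (E a b * E c d') = Q a b * Q c d'.
Proof.
move=> incr a b c d'.
have [ab|/incid_delta_out->] := boolP (a <= b)%O; last by rewrite mul0r linear0 mul0r.
have [cd|/incid_delta_out->] := boolP (c <= d')%O; last by rewrite mulr0 linear0 mulr0.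
have Q_corner x y : (x < y)%O -> Q x y = P x * Q x y * P y.
  move=> xy; case: (Q_orient xy) => [[] // | [syx _]].
  by move: (incr _ _ xy); rewrite lt_gtF.
rewrite incid_deltaM // (mxunitM (q := fun x y => Q x y) P_idem P_orth Q_corner Q_chain) //.
by case: eqP; rewrite ?linear0.
Qed.

Lemma phi_deltaM_decr : (forall x y, (x < y)%O -> (sigma y < sigma x)%O) ->
  forall a b c d', phi (E a b * E c d') = Q c d' * Q a b.
Proof.
move=> decr a b c d'.
have [ab|/incid_delta_out->] := boolP (a <= b)%O; last by rewrite mul0r linear0 mulr0.
have [cd|/incid_delta_out->] := boolP (c <= d')%O; last by rewrite mulr0 linear0 mul0r.
have P_orth' x y : x != y -> P y * P x = 0 by rewrite eq_sym; apply: P_orth.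
have Q_corner x y : (x < y)%O -> Q x y = P y * (Q x y * P x).
  move=> xy; case: (Q_orient xy) => [[sxy _] | [_ Qxy]]; last by rewrite {1}Qxy mulrA.
  by move: (decr _ _ xy); rewrite lt_gtF.
have Q_chain' x y z : (x < y)%O -> (y < z)%O -> jordan (Q x y : A^c) (Q y z) = Q x z.
  by move=> xy yz; rewrite jordanC; apply: Q_chain.
have := @mxunitM A^c _ X (fun x y => Q x y) P_idem P_orth' Q_corner Q_chain' _ _ _ _ ab cd.
rewrite incid_deltaM // => Qc; apply: etrans _ (esym Qc).
by case: eqP; rewrite ?linear0.
Qed.

Theorem phi_mul_or_mulr : poset_connected X ->
  (forall f g, phi (f * g) = phi f * phi g) \/ (forall f g, phi (f * g) = phi g * phi f).
Proof.
move=> connX; case: (monotone_or_antitone sigma_inj sigma_lt_cmp sigma_chain connX).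
  by move/phi_deltaM_incr/phi_mulM; left.
by move/phi_deltaM_decr/phi_mulMr; right.
Qed.

End IdempotentPreserving.

Theorem corollary4p5 (d : Order.disp_t) (X : finPOrderType d) (F : fieldType)
  (hX : poset_connected X) (hF : (2 \notin [pchar F])%N)
  (phi : incid X F -> incid X F) :
  bijective phi -> incid_linear phi ->
  (forall e, incid_idem e -> incid_idem (phi e)) ->
  incid_automorphism phi \/ incid_antiautomorphism phi.
Proof.
move=> phi_bij phi_lin phi_idem.
have two_neq0 : (2 : F) != 0 by apply: contra hF => two0; rewrite inE /= two0.
have [psi _ psiK] := phi_bij.
case: (phi_mul_or_mulr two_neq0 phi_lin (bij_inj phi_bij) phi_idem hX) => phiM; [left|right].
  split=> //; have := phiM 1 (psi 1).
  by rewrite mul1r psiK mulr1 => /esym.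
split=> //; have := phiM (psi 1) 1.
by rewrite mulr1 psiK mulr1 => /esym.
Qed.
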